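(* Let $x_0,\ldots,x_n\in\mathbb{R}^n$ be such that $P:=\mathrm{conv}\{x_0,\ldots,x_n\}$ is an $n$-simplex with $0\in P^\circ$ (the interior of $P$). For $i=0,\ldots,n$ let $\sigma_i:=\mathrm{cone}\{x_0,\ldots,\hat{x}_i,\ldots,x_n\}$, where $\hat{x}_i$ indicates that $x_i$ is omitted. Let $x\in\mathbb{R}^n$ and fix $i\in\{0,\ldots,n\}$. Then $x\in(-\sigma_i)^\circ$ if and only if $$P':=\mathrm{conv}\{x_0,\ldots,\hat{x}_i,\ldots,x_n,x\}$$ is an $n$-simplex with $0\in {P'}^\circ$, and $\Delta(P')$ is a complete fan.
   Context: For a polytope $Q\subset\mathbb{R}^n$ containing the origin in its interior, $\Delta(Q)$ denotes the fan whose cones are the cones (with apex the origin) over the faces of $Q$. For a cone $\sigma$, $(-\sigma)^\circ$ denotes the interior of $-\sigma=\{-v: v\in\sigma\}$. *)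

From HB Require Import structures.
From mathcomp Require Import all_boot all_order all_algebra.
From mathcomp Require Import all_classical all_reals all_analysis.
Set Implicit Arguments. Unset Strict Implicit. Unset Printing Implicit Defensive.
Import Order.TTheory GRing.Theory Num.Theory.
Import numFieldNormedType.Exports.
Local Open Scope classical_set_scope.
Local Open Scope ring_scope.

Section Defs.
Variable R : realType.
Variable n : nat.
Notation vec := 'rV[R]_n.

Definition dotv (a y : vec) : R := \sum_(k < n) a 0 k * y 0 k.

Definition conv_hull (m : nat) (v : 'I_m -> vec) : set vec :=
  [set z | exists l : 'I_m -> R, (forall j, 0 <= l j) /\
           \sum_(j < m) l j = 1 /\ z = \sum_(j < m) l j *: v j].

Definition cone_of (m : nat) (P : pred 'I_m) (v : 'I_m -> vec) : set vec :=
  [set z | exists l : 'I_m -> R, (forall j, 0 <= l j) /\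
           z = \sum_(j < m | P j) l j *: v j].

Definition aff_indep (m : nat) (v : 'I_m -> vec) : Prop :=
  forall l : 'I_m -> R, \sum_(j < m) l j = 0 ->
    \sum_(j < m) l j *: v j = 0 -> forall j, l j = 0.

Definition is_n_simplex (S : set vec) : Prop :=
  exists v : 'I_n.+1 -> vec, aff_indep v /\ S = conv_hull v.

(* faces of a polytope Q (intersections with supporting hyperplanes,
   including Q itself and possibly the empty face) *)
Definition is_face (Q F : set vec) : Prop :=
  exists (a : vec) (b : R), (forall y, Q y -> dotv a y <= b) /\
    F = Q `&` [set y | dotv a y = b].

(* the cone with apex the origin over a set F (cone over the empty face = {0}) *)
Definition cone_over (F : set vec) : set vec :=
  [set z | z = 0 \/ exists t y, 0 <= t /\ F y /\ z = t *: y].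

Definition Delta (Q : set vec) : set (set vec) :=
  [set C | exists F, is_face Q F /\ C = cone_over F].

Definition complete_fan (D : set (set vec)) : Prop :=
  \bigcup_(C in D) C = setT.

Definition neg_set (S : set vec) : set vec := [set - y | y in S].

End Defs.

Definition replace_at (T : Type) (m : nat) (v : 'I_m -> T) (i : 'I_m) (x : T)
  : 'I_m -> T := fun j => if j == i then x else v j.

(* As 0 lies in the interior
   of P, some strictly positive combination of the x_j vanishes, so the x_j with
   j <> i span R^n and hence form a basis. If x lies in the interior of -sigma_i, then x plus a
   small multiple of the sum of these x_j is still in -sigma_i, which yields a
   strictly positive linear relation among the vertices of P'. Together with the
   basis this forces affine independence, and it makes every vector a
   nonnegative combination of the vertices of P', so that a ball around 0 sits
   inside P'. Conversely, a positive relation for P' writes x as -sum mu_j x_j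
   with mu > 0, and a ball around 0 in P' moves x only by amounts that keep
   these coefficients nonnegative. Finally Delta(Q) is complete as soon as 0 is
   interior to Q, because the cone over the face Q itself is everything. *)

From HB Require Import structures.
From mathcomp Require Import all_boot all_order all_algebra.
From mathcomp Require Import all_classical all_reals all_analysis.
From mathcomp Require Import ring lra.
Import Order.TTheory GRing.Theory Num.Theory.
Import numFieldNormedType.Exports.
Local Open Scope classical_set_scope.
Local Open Scope ring_scope.
Set Implicit Arguments. Unset Strict Implicit. Unset Printing Implicit Defensive.

Section FiniteBounds.
Variables (R : realFieldType) (I : finType).

Lemma ler_term_sum (a : I -> R) j : (forall k, 0 <= a k) -> a j <= \sum_k a k.
Proof. by move=> a0; rewrite (bigD1 j) //= lerDl sumr_ge0. Qed.

Lemma fin_upper_bound (f : I -> R) : exists C, forall j, f j <= C.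
Proof.
exists (\sum_k `|f k|) => j.
apply: le_trans (ler_norm _) _; exact: ler_term_sum.
Qed.

Lemma fin_pos_lower_bound (f : I -> R) :
  (forall j, 0 < f j) -> exists2 c, 0 < c & forall j, c <= f j.
Proof.
move=> fp; have [C HC] := fin_upper_bound (fun j => (f j)^-1).
have C1 : 0 < 1 + `|C| by rewrite ltr_pwDl.
exists (1 + `|C|)^-1 => [|j]; first by rewrite invr_gt0.
rewrite -[f j]invrK lef_pV2 ?posrE ?invr_gt0 //.
apply: le_trans (HC j) _; apply: le_trans (ler_norm C) _; by rewrite lerDr.
Qed.

End FiniteBounds.

Section Simplex.
Variables (R : realType) (n : nat).
Local Notation vec := 'rV[R]_n.

Definition has_pos_relation (m : nat) (ws : 'I_m -> vec) : Prop :=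
  exists2 kap : 'I_m -> R, (forall k, 0 < kap k) & \sum_k kap k *: ws k = 0.

Definition lin_indep_off (m : nat) (i : 'I_m) (ws : 'I_m -> vec) : Prop :=
  forall c : 'I_m -> R, \sum_(j | j != i) c j *: ws j = 0 ->
  forall j, j != i -> c j = 0.

Lemma interiorP (A : set vec) x :
  interior A x <-> exists2 e : R, 0 < e & forall y, `|x - y| < e -> A y.
Proof. by rewrite /interior -nbhs_nbhs_norm; split=> -[e e0 H]; exists e. Qed.

Lemma interior0P (A : set vec) :
  interior A 0 <-> exists2 e : R, 0 < e & forall z, `|z| < e -> A z.
Proof.
rewrite interiorP; split=> -[e e0 H]; exists e => // z hz; apply: H;
  by rewrite ?sub0r ?normrN in hz *.
Qed.

Lemma scale_norm_lt (w : vec) (e : R) :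
  0 < e -> exists2 d : R, 0 < d & `|d *: w| < e.
Proof.
move=> e0; have w0 : 0 <= `|w| by [].
exists (e / (2 * (`|w| + 1))).
  by apply: divr_gt0 => //; apply: mulr_gt0 => //; lra.
rewrite normrZ ger0_norm; last by apply: divr_ge0; [lra | apply: mulr_ge0; lra].
rewrite mulrAC ltr_pdivrMr; last by apply: mulr_gt0; lra.
nra.
Qed.

Lemma pivot_relation (m : nat) (ws : 'I_m -> vec) (l : 'I_m -> R) i :
  l i != 0 -> \sum_j l j *: ws j = 0 ->
  ws i = \sum_(j | j != i) (- l j / l i) *: ws j.
Proof.
move=> li0; rewrite (bigD1 i) //= => /eqP; rewrite addr_eq0 => /eqP h.
rewrite -[ws i]scale1r -(mulVf li0) -scalerA h -sumrN scaler_sumr.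
by apply: eq_bigr => j _; rewrite scalerN -scaleNr scalerA mulNr mulNr mulrC.
Qed.

Lemma interior0_has_pos_relation (m : nat) (ws : 'I_m -> vec) :
  interior (conv_hull ws) 0 -> has_pos_relation ws.
Proof.
move=> /interior0P [e e0 H].
have [d d0 hd] := scale_norm_lt (\sum_j ws j) e0.
have [a [a0 [_ ha]]] : conv_hull ws (- (d *: \sum_j ws j)).
  by apply: H; rewrite normrN.
exists (fun j => a j + d) => [j|]; first by have := a0 j; lra.
under eq_bigr do rewrite scalerDl.
by rewrite big_split /= -ha -scaler_sumr addNr.
Qed.

Lemma span_neq_of_interior0 (m : nat) (ws : 'I_m -> vec) i :
  interior (conv_hull ws) 0 ->
  forall z, exists c : 'I_m -> R, z = \sum_(j | j != i) c j *: ws j.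
Proof.
move=> hint z; have [l lp hl] := interior0_has_pos_relation hint.
have /interior0P [e e0 H] := hint; have [d d0 hd] := scale_norm_lt z e0.
have [a [_ [_ ha]]] := H _ hd.
exists (fun j => d^-1 * (a j + a i * (- l j / l i))).
have -> : z = d^-1 *: (d *: z) by rewrite scalerA mulVf ?gt_eqF ?scale1r.
rewrite ha (bigD1 i) //= (pivot_relation (lt0r_neq0 (lp i)) hl) scaler_sumr.
rewrite -big_split scaler_sumr; apply: eq_bigr => j _.
by rewrite !scalerA /= -scalerDl scalerA addrC.
Qed.

Lemma lin_indep_off_of_interior0 (xs : 'I_n.+1 -> vec) i :
  interior (conv_hull xs) 0 -> lin_indep_off i xs.
Proof.
move=> hint.
pose Y : 'M[R]_n := \matrix_(k, l) xs (lift i k) 0 l.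
have sum_lift (c : 'I_n.+1 -> R) :
    \sum_(j | j != i) c j *: xs j = (\row_k c (lift i k)) *m Y.
  rewrite (reindex_omap (lift i) (unlift i)) /=; last first.
    by move=> j; case: unliftP => [k ->|->] //; rewrite eqxx.
  under eq_bigl do rewrite eq_sym neq_lift liftK eqxx.
  rewrite mulmx_sum_row; apply: eq_bigr => k _; rewrite mxE; congr (_ *: _).
  by apply/rowP => l; rewrite !mxE.
have unitY : Y \in unitmx.
  rewrite -row_full_unit; apply/row_fullP.
  have /choice [E HE] : forall k : 'I_n, exists e : 'I_n.+1 -> R,
      row k (1%:M : 'M[R]_n) = \sum_(j | j != i) e j *: xs j.
    by move=> k; apply: span_neq_of_interior0.
  exists (\matrix_(k, l) E k (lift i l)).
  apply/row_matrixP => k; rewrite row_mul HE sum_lift; congr (_ *m _).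
  by apply/rowP => l; rewrite !mxE.
move=> c hc j ji.
have c0 : \row_k c (lift i k) = 0.
  by rewrite -[\row_k _](mulmxK unitY) -sum_lift hc mul0mx.
rewrite eq_sym in ji; have [k -> _] := unlift_some ji.
by have := congr1 (fun M : 'rV[R]_n => M 0 k) c0; rewrite !mxE.
Qed.

Lemma sum_neq_replace_at (m : nat) (xs : 'I_m -> vec) i x (c : 'I_m -> R) :
  \sum_(j | j != i) c j *: replace_at xs i x j =
  \sum_(j | j != i) c j *: xs j.
Proof. by apply: eq_bigr => j ji; rewrite /replace_at (negbTE ji). Qed.

Lemma sum_replace_at (m : nat) (xs : 'I_m -> vec) i x (c : 'I_m -> R) :
  \sum_j c j *: replace_at xs i x j = c i *: x + \sum_(j | j != i) c j *: xs j.
Proof. by rewrite (bigD1 i) //= sum_neq_replace_at /replace_at eqxx. Qed.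

Lemma lin_indep_off_replace_at (m : nat) (xs : 'I_m -> vec) i x :
  lin_indep_off i xs -> lin_indep_off i (replace_at xs i x).
Proof. by move=> hind c; rewrite sum_neq_replace_at; apply: hind. Qed.

Lemma aff_indep_of_pos_relation (m : nat) (ws : 'I_m -> vec) i :
  lin_indep_off i ws -> has_pos_relation ws -> aff_indep ws.
Proof.
move=> hind [kap kp hk] L hL0 hLv.
pose t := L i / kap i.
have ht : \sum_(j | j != i) (L j - t * kap j) *: ws j = 0.
  have : \sum_j (L j - t * kap j) *: ws j = 0.
    under eq_bigr do rewrite scalerBl -scalerA.
    by rewrite sumrB -scaler_sumr hk scaler0 hLv subr0.
  by rewrite (bigD1 i) //= /t divfK ?gt_eqF // subrr scale0r add0r.
have hL j : L j = t * kap j.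
  have [->|ji] := eqVneq j i; first by rewrite /t divfK ?gt_eqF.
  by apply/eqP; rewrite -subr_eq0; apply/eqP; apply: hind ht _ ji.
have t0 : t = 0.
  have : t * \sum_j kap j = 0.
    by rewrite mulr_sumr -[RHS]hL0; apply: eq_bigr => j _; rewrite hL.
  have S0 : 0 < \sum_j kap j.
    by apply: (lt_le_trans (kp i)); apply: ler_term_sum => k; apply: ltW.
  by move/eqP; rewrite mulf_eq0 (gt_eqF S0) orbF => /eqP.
by move=> j; rewrite hL t0 mul0r.
Qed.

Lemma neg_cone_interior_pos_relation (m : nat) (xs : 'I_m -> vec) i x :
  interior (neg_set (cone_of (fun j => j != i) xs)) x ->
  has_pos_relation (replace_at xs i x).
Proof.
move=> /interiorP [e e0 H].
pose T := \sum_(j | j != i) xs j.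
have [d d0 hd] := scale_norm_lt T e0.
have [z [c [c0 ->]] hz] : neg_set (cone_of (fun j => j != i) xs) (x + d *: T).
  by apply: H; rewrite opprD addrA subrr add0r normrN.
exists (fun j => if j == i then 1 else c j + d) => [j|].
  by case: eqP => // _; have := c0 j; lra.
rewrite sum_replace_at eqxx scale1r.
have -> : \sum_(j | j != i) (if j == i then 1 else c j + d) *: xs j
    = \sum_(j | j != i) c j *: xs j + d *: T.
  rewrite /T scaler_sumr -big_split /=; apply: eq_bigr => j ji.
  by rewrite (negbTE ji) scalerDl.
by rewrite -[x](addrK (d *: T)) -hz /= -opprD addNr.
Qed.

Lemma nonneg_comb_of_pos_relation (m : nat) (ws : 'I_m -> vec) (c : 'I_m -> R) :
  has_pos_relation ws ->
  exists2 g : 'I_m -> R, (forall k, 0 <= g k) &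
    \sum_k c k *: ws k = \sum_k g k *: ws k.
Proof.
case=> kap kp hk; have [C HC] := fin_upper_bound (fun k => - c k / kap k).
exists (fun k => c k + C * kap k) => [k|].
  by have := HC k; rewrite ler_pdivrMr // => ?; lra.
apply/esym; under eq_bigr do rewrite scalerDl -scalerA.
by rewrite big_split /= -scaler_sumr hk scaler0 addr0.
Qed.

Lemma conv_hull_subunit_comb (m : nat) (ws : 'I_m.+1 -> vec) (b : 'I_m.+1 -> R) :
  has_pos_relation ws -> (forall k, 0 <= b k) -> \sum_k b k <= 1 ->
  conv_hull ws (\sum_k b k *: ws k).
Proof.
case=> kap kp hk b0 sb.
have S0 : 0 < \sum_k kap k.
  by apply: (lt_le_trans (kp ord0)); apply: ler_term_sum => k; apply: ltW.
pose t := (1 - \sum_k b k) / \sum_k kap k.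
have t0 : 0 <= t by apply: divr_ge0; lra.
exists (fun k => b k + t * kap k); split; [|split].
- by move=> k; apply: addr_ge0 (b0 k) (mulr_ge0 t0 (ltW (kp k))).
- by rewrite big_split /= -mulr_sumr /t divfK ?gt_eqF // addrC subrK.
- apply/esym; under eq_bigr do rewrite scalerDl -scalerA.
  by rewrite big_split /= -scaler_sumr hk scaler0 addr0.
Qed.

Lemma interior0_conv_hull_span (p m : nat) (ys : 'I_p -> vec)
    (ws : 'I_m.+1 -> vec) :
  interior (conv_hull ys) 0 -> has_pos_relation ws ->
  (forall j, exists c : 'I_m.+1 -> R, ys j = \sum_k c k *: ws k) ->
  interior (conv_hull ws) 0.
Proof.
move=> /interior0P [rho rho0 H] hrel hspan.
have /choice [G HG] : forall j, exists g : 'I_m.+1 -> R,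
    (forall k, 0 <= g k) /\ ys j = \sum_k g k *: ws k.
  move=> j; have [c ->] := hspan j.
  by have [g g0 ->] := nonneg_comb_of_pos_relation c hrel; exists g.
have G0 j k : 0 <= G j k by case: (HG j) => + _; apply.
pose K := 1 + \sum_j \sum_k G j k.
have K0 : 0 < K.
  have : 0 <= \sum_j \sum_k G j k by apply: sumr_ge0 => j _; apply: sumr_ge0.
  by rewrite /K; lra.
apply/interior0P; exists (rho / K) => [|y hy]; first exact: divr_gt0.
have /H [a [a0 [a1 ha]]] : `|K *: y| < rho.
  by rewrite normrZ gtr0_norm // mulrC -ltr_pdivlMr.
pose b k := (\sum_j a j * G j k) / K.
have -> : y = \sum_k b k *: ws k.
  rewrite -[y]scale1r -(mulVf (lt0r_neq0 K0)) -scalerA ha scaler_sumr.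
  under eq_bigr do rewrite (proj2 (HG _)) !scaler_sumr.
  rewrite exchange_big /=; apply: eq_bigr => k _.
  rewrite /b mulr_suml scaler_suml; apply: eq_bigr => j _.
  by rewrite !scalerA mulrC.
apply: conv_hull_subunit_comb => [//|k|].
  by apply: divr_ge0; [apply: sumr_ge0 => j _; apply: mulr_ge0 | lra].
rewrite -mulr_suml ler_pdivrMr // mul1r exchange_big /=.
apply: (@le_trans _ _ (\sum_j \sum_k G j k)); last by rewrite /K lerDr.
apply: ler_sum => j _; apply: ler_sum => k _.
by apply: ler_piMl => //; rewrite -a1; apply: ler_term_sum.
Qed.

Lemma interior0_replace_at (m : nat) (xs : 'I_m.+1 -> vec) i x :
  interior (conv_hull xs) 0 -> has_pos_relation (replace_at xs i x) ->
  interior (conv_hull (replace_at xs i x)) 0.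
Proof.
move=> hint hrel; apply: (interior0_conv_hull_span hint hrel) => j.
have [->|ji] := eqVneq j i.
  have [l lp hl] := interior0_has_pos_relation hint.
  exists (fun k => if k == i then 0 else - l k / l i).
  rewrite sum_replace_at eqxx scale0r add0r (pivot_relation (lt0r_neq0 (lp i)) hl).
  by apply: eq_bigr => k ki; rewrite (negbTE ki).
exists (fun k => (k == j)%:R); rewrite (bigD1 j) //= eqxx scale1r big1 ?addr0.
  by rewrite /replace_at (negbTE ji).
by move=> k kj; rewrite (negbTE kj) scale0r.
Qed.

Lemma neg_cone_interior_of_interior0 (m : nat) (xs : 'I_m -> vec) i x :
  interior (conv_hull (replace_at xs i x)) 0 ->
  interior (neg_set (cone_of (fun j => j != i) xs)) x.
Proof.
move=> hint; have [kap kp hk] := interior0_has_pos_relation hint.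
have /interior0P [r r0 Hr] := hint.
pose mu j := kap j / kap i.
have mup j : 0 < mu j by apply: divr_gt0.
pose U := \sum_(j | j != i) mu j *: xs j.
have hx : x = - U.
  have := pivot_relation (lt0r_neq0 (kp i)) hk.
  rewrite sum_neq_replace_at {1}/replace_at eqxx => ->.
  by rewrite -sumrN; apply: eq_bigr => j _; rewrite -scaleNr mulNr.
have [c c0 hc] := fin_pos_lower_bound mup.
apply/interiorP; exists (r * c) => [|y hy]; first exact: mulr_gt0.
have /Hr [a [a0 [a1 ha]]] : `|c^-1 *: (y - x)| < r.
  by rewrite normrZ gtr0_norm ?invr_gt0 // distrC mulrC ltr_pdivrMr.
rewrite sum_replace_at in ha.
pose W := \sum_(j | j != i) a j *: xs j.
pose nu j := (1 + c * a i) * mu j - c * a j.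
exists (\sum_(j | j != i) nu j *: xs j).
  exists nu; split => // j.
  have aj1 : a j <= 1 by rewrite -a1; apply: ler_term_sum.
  have t1 : 0 <= c * a i * mu j.
    by apply: mulr_ge0; [apply: mulr_ge0; [apply: ltW | apply: a0] | apply: ltW].
  have t2 : c * a j <= c * 1 by rewrite ler_pM2l.
  by have := hc j; rewrite /nu mulrDl mul1r; lra.
have hy' : y = x + c *: (a i *: x + W).
  by rewrite -ha scalerA mulfV ?gt_eqF // scale1r addrC subrK.
have -> : \sum_(j | j != i) nu j *: xs j = (1 + c * a i) *: U - c *: W.
  rewrite /U /W !scaler_sumr -sumrB; apply: eq_bigr => j _.
  by rewrite /nu scalerBl !scalerA.
by rewrite hy' hx; apply/rowP => k; rewrite !mxE; ring.
Qed.

Lemma Delta_complete_of_interior0 (Q : set vec) :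
  interior Q 0 -> complete_fan (Delta Q).
Proof.
move=> /interior0P [e e0 H]; apply/seteqP; split=> // y _.
have dot0 z : dotv 0 z = 0 by rewrite /dotv big1 // => k _; rewrite mxE mul0r.
exists (cone_over Q).
  exists Q; split => //; exists 0, 0; split; first by move=> z _; rewrite dot0.
  by apply/seteqP; split=> z /=; [move=> Qz; split; rewrite ?dot0 | case].
right; have [d d0 hd] := scale_norm_lt y e0.
exists d^-1, (d *: y); split; first by rewrite invr_ge0 ltW.
by split; [exact: H | rewrite scalerA mulVf ?scale1r // gt_eqF].
Qed.

End Simplex.

Unset Implicit Arguments.

Theorem lemma3p1 (R : realType) (n : nat) (xs : 'I_n.+1 -> 'rV[R]_n)
  (i : 'I_n.+1) (x : 'rV[R]_n) :
  is_n_simplex (conv_hull xs) -> interior (conv_hull xs) 0 ->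
  (interior (neg_set (cone_of (fun j => j != i) xs)) x <->
   [/\ is_n_simplex (conv_hull (replace_at xs i x)),
       interior (conv_hull (replace_at xs i x)) 0 &
       complete_fan (Delta (conv_hull (replace_at xs i x)))]).
Proof.
move=> _ hint; split; last by case=> _ hint' _; apply: neg_cone_interior_of_interior0.
move=> hx; have hrel := neg_cone_interior_pos_relation hx.
have hint' := interior0_replace_at hint hrel.
split; last exact: Delta_complete_of_interior0.
- exists (replace_at xs i x); split => //.
  apply: aff_indep_of_pos_relation hrel.
  exact/lin_indep_off_replace_at/lin_indep_off_of_interior0.
- exact: hint'.
Qed.
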